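(* Consider a synchronous round-based message-passing system of $n$ processes $p_1,\dots,p_n$ with reliable point-to-point channels between every pair of processes, with authentication (unforgeable signatures), in which up to $t$ processes, for any $0 \le t < n$, may be Byzantine. Then the two-round algorithm $\mathcal{A}_1$ described in the context solves $k$-set agreement for $k = \lfloor \frac{n}{n-t} \rfloor + 1$.
   Context: Model: in each round every process sends messages which are received in that same round. Every process $p_i$ has a private signing key and knows all public keys; signatures of correct processes cannot be forged, so a faulty process cannot produce or alter a value signed by a correct process; messages whose signatures are invalid are ignored (treated as not received). A Byzantine process may deviate arbitrarily from the protocol; a correct process never fails. $k$-set agreement (here decisions are allowed in $V \cup \{\bot\}$, where $\bot$ counts as a decided value): each process proposes an initial value from a set $V$; (Validity) if all correct processes propose the same value $v$, no correct process decides a value different from $v$; (Agreement) at most $k$ distinct values are decided by correct processes; (Termination) every correct process eventually decides. Algorithm $\mathcal{A}_1$, code of $p_i$ with input $v_i$: $p_i$ keeps an $n\times n$ matrix $M_i$ with all entries initially $\bot$, and sets $M_i[i][i] := v_i$. Round 1: $p_i$ sends $v_i$, signed by $p_i$, to all processes; when it receives a validly signed value $v_j$ from $p_j$ it sets $M_i[i][j] := v_j$. Round 2: $p_i$ sends its row $M_i[i][\ast]$ (each non-$\bot$ entry $M_i[i][j]$ carrying $p_j$'s signature) to all processes; when it receives such a vector from $p_j$ it stores it as $M_i[j][\ast]$ (entries without a valid signature of their originator being treated as $\bot$). At the end of round 2, $p_i$ builds a vector $V_i$ with $V_i[i] = v_i$ and, for each $j \ne i$: letting $w = M_i[i][j]$,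 if $w = \bot$ then $V_i[j] = \bot$; otherwise $V_i[j] = w$, except that $V_i[j] := \bot$ if there is $\ell \ne i$ with $M_i[\ell][j] \ne \bot$ and $M_i[\ell][j] \ne w$. Finally, if at least $n-t$ entries of $V_i$ are equal to $v_i$, $p_i$ decides $v_i$; otherwise it decides $\bot$. *)

From mathcomp Require Import all_boot.
Set Implicit Arguments. Unset Strict Implicit. Unset Printing Implicit Defensive.

Section A1.
Variables (V : eqType) (n t : nat).
Variable v : 'I_n -> V.
(* set of Byzantine processes *)
Variable F : {set 'I_n}.
(* r1 j i : the (validly signed by p_j) value faulty p_j sends p_i in round 1,
   None = nothing received / invalid signature. *)
Variable r1 : 'I_n -> 'I_n -> option V.
(* r2 j i l : entry l of the vector faulty p_j sends p_i in round 2, after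
   signature validation (None = bot / invalid signature). *)
Variable r2 : 'I_n -> 'I_n -> 'I_n -> option V.

(* Unforgeability: a correct p_l only ever signs v l, so in a round-2 vector
   sent by a faulty process, entry l (l correct) is bot or v l. *)
Definition adversary_ok : Prop :=
  forall j i l, j \in F -> l \notin F -> r2 j i l = None \/ r2 j i l = Some (v l).

(* M_i[i][j] : own row after round 1, for correct p_i *)
Definition row1 (i j : 'I_n) : option V :=
  if j == i then Some (v i)
  else if j \in F then r1 j i else Some (v j).

(* M_i[j][l] after round 2, for correct p_i *)
Definition mat (i j l : 'I_n) : option V :=
  if j == i then row1 i l
  else if j \in F then r2 j i l else row1 j l.

Definition vecV (i j : 'I_n) : option V :=
  if j == i then Some (v i)
  else match row1 i j with
       | None => None
       | Some w =>
         if [exists l : 'I_n, (l != i) && (mat i l j != None) && (mat i l j != Some w)]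
         then None else Some w
       end.

(* decision of correct p_i; None stands for bot *)
Definition decide (i : 'I_n) : option V :=
  if n - t <= #|[pred j | vecV i j == Some (v i)]| then Some (v i) else None.

End A1.

(* If two correct processes p_i and p_i' are both backed by entry j, i.e.
   V_i[j] = v_i and V_i'[j] = v_i', then p_i has received the row of p_i'
   unaltered, and its consistency check on column j forces v_i = v_i' (when j = i,
   exchange the roles of i and i').  So the sets of entries backing distinct decided
   values are pairwise disjoint, each has at least n - t elements, and at most
   n %/ (n - t) values other than bot are decided.  For validity, unforgeability
   makes every relayed entry about a correct p_j either bot or v_j, so V_i[j] = v_j
   for all n - t correct j. *)
From mathcomp Require Import all_boot.
Set Implicit Arguments. Unset Strict Implicit. Unset Printing Implicit Defensive.

Lemma size_undup_map_option (I U : eqType) (f : I -> option U) (s : seq I) :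
  size (undup (map f s)) <= (size (undup (pmap f s))).+1.
Proof.
have -> : (size (undup (pmap f s))).+1 = size (None :: map Some (undup (pmap f s))).
  by rewrite /= size_map.
apply: uniq_leq_size; first exact: undup_uniq.
move=> o; rewrite mem_undup inE => fs_o.
case: o fs_o => [u|//] fs_u; apply/orP; right.
by rewrite mem_map; [rewrite mem_undup mem_pmap | exact: Some_inj].
Qed.

Lemma size_mul_leq_card_disjoint (T : finType) (I : eqType) (S : I -> {set T})
    (s : seq I) (m : nat) :
  uniq s -> {in s &, forall a b, a != b -> [disjoint S a & S b]} ->
  {in s, forall a, m <= #|S a|} -> size s * m <= #|T|.
Proof.
move=> uniq_s disjS largeS; apply: leq_trans (max_card (\bigcup_(a <- s) S a)).
elim: s uniq_s disjS largeS => [|a s IHs] /=; first by rewrite mul0n.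
case/andP=> a_notin_s uniq_s disjS largeS.
have disj_a : [disjoint S a & \bigcup_(b <- s) S b].
  rewrite big_seq; apply: (big_ind (fun U : {set T} => [disjoint S a & U])).
  - by rewrite -setI_eq0 setI0.
  - by move=> U W; rewrite -!setI_eq0 setIUr => /eqP-> /eqP->; rewrite setU0.
  move=> b b_in_s; apply: disjS; rewrite ?inE ?eqxx ?b_in_s ?orbT //.
  by apply: contraNneq a_notin_s => ->.
rewrite big_cons cardsU (disjoint_setI0 disj_a) cards0 subn0 mulSn leq_add //.
  by apply: largeS; rewrite inE eqxx.
apply: IHs => // [b c b_in c_in | b b_in]; [apply: disjS | apply: largeS];
  by rewrite inE ?b_in ?c_in orbT.
Qed.

Section AlgorithmA1.
Variables (V : eqType) (n t : nat) (v : 'I_n -> V) (F : {set 'I_n}).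
Variables (r1 : 'I_n -> 'I_n -> option V) (r2 : 'I_n -> 'I_n -> 'I_n -> option V).

Lemma row1_correct i j : j \notin F -> row1 v F r1 i j = Some (v j).
Proof. by rewrite /row1; case: eqP => [->|_] // /negbTE ->. Qed.

Lemma mat_correct_column i l j : adversary_ok v F r2 -> j \notin F ->
  mat v F r1 r2 i l j = None \/ mat v F r1 r2 i l j = Some (v j).
Proof.
move=> hadv hj; rewrite /mat; case: eqP => _; first by right; exact: row1_correct.
by case: ifP => hl; [exact: hadv | right; exact: row1_correct].
Qed.

Lemma vecV_correct i j : adversary_ok v F r2 -> j \notin F ->
  vecV v F r1 r2 i j = Some (v j).
Proof.
move=> hadv hj; rewrite /vecV; case: eqP => [-> //|_].
rewrite row1_correct // ifF //; apply/existsPn => l.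
by case: (mat_correct_column i l hadv hj) => ->; rewrite ?eqxx !andbF.
Qed.

Lemma vecV_row1 i j w : vecV v F r1 r2 i j = Some w -> row1 v F r1 i j = Some w.
Proof.
rewrite /vecV; case: eqP => [-> <-|_]; first by rewrite /row1 eqxx.
by case: row1 => // u; case: ifP => // _ [->].
Qed.

Lemma vecV_consistent i l j w w' : l \notin F -> l != i -> j != i ->
  vecV v F r1 r2 i j = Some w -> row1 v F r1 l j = Some w' -> w = w'.
Proof.
move=> hl nli nji; rewrite /vecV (negbTE nji).
case: row1 => // u; case: existsP => // consistent [<-] row_l.
have [//|neq_uw'] := eqVneq u w'; case: consistent; exists l.
by rewrite nli /mat (negbTE nli) (negbTE hl) row_l /= eq_sym.
Qed.

Lemma correct_backers_agree i i' j : i \notin F -> i' \notin F ->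
  vecV v F r1 r2 i j = Some (v i) -> vecV v F r1 r2 i' j = Some (v i') ->
  v i = v i'.
Proof.
move=> hi hi' back_i back_i'; have [<- //|nii'] := eqVneq i i'.
have [eji|nji] := eqVneq j i.
  rewrite eji in back_i back_i'; apply/esym.
  exact: (vecV_consistent hi nii' nii' back_i' (vecV_row1 back_i)).
by apply: vecV_consistent hi' _ nji back_i (vecV_row1 back_i'); rewrite eq_sym.
Qed.

Lemma decide_Some i a : decide t v F r1 r2 i = Some a -> v i = a.
Proof. by rewrite /decide; case: ifP => // _ []. Qed.

Definition backers (a : V) : {set 'I_n} :=
  [set j | [exists i, [&& i \notin F, decide t v F r1 r2 i == Some a
                        & vecV v F r1 r2 i j == Some a]]].

Lemma backers_disjoint a b : a != b -> [disjoint backers a & backers b].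
Proof.
move=> neq_ab; rewrite -setI_eq0; apply/eqP/setP => j; rewrite !inE.
apply/negbTE/negP => /andP[/existsP[i /and3P[hi /eqP dec_i /eqP back_i]]].
case/existsP=> i' /and3P[hi' /eqP dec_i' /eqP back_i'].
move: neq_ab back_i back_i'; rewrite -(decide_Some dec_i) -(decide_Some dec_i').
by move=> + back_i back_i'; rewrite (correct_backers_agree hi hi' back_i back_i') eqxx.
Qed.

Lemma backers_large i a : i \notin F -> decide t v F r1 r2 i = Some a ->
  n - t <= #|backers a|.
Proof.
move=> hi dec_i; move: (dec_i); rewrite /decide; case: ifP => // large [eq_a].
apply: leq_trans large _; apply: subset_leq_card; apply/subsetP => j.
by rewrite !inE => back_j; apply/existsP; exists i; rewrite hi dec_i -eq_a back_j eqxx.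
Qed.

Lemma A1_validity x : adversary_ok v F r2 -> #|F| <= t ->
  (forall j, j \notin F -> v j = x) ->
  forall i, i \notin F -> decide t v F r1 r2 i = Some x.
Proof.
move=> hadv hF hx i hi; rewrite /decide (hx i hi) ifT //.
apply: (@leq_trans #|~: F|); first by rewrite cardsCs card_ord setCK leq_sub2l.
apply: subset_leq_card; apply/subsetP => j; rewrite inE => hj.
by rewrite inE /= vecV_correct // !hx.
Qed.

Lemma A1_agreement : t < n ->
  size (undup [seq decide t v F r1 r2 i | i <- enum (~: F)]) <= n %/ (n - t) + 1.
Proof.
move=> ltn_tn; set dec := decide t v F r1 r2.
set A := undup (pmap dec (enum (~: F))).
apply: leq_trans (size_undup_map_option _ _) _; rewrite -/A addn1 ltnS.
rewrite leq_divRL ?subn_gt0 //.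
have decided a : a \in A -> exists2 i, i \notin F & dec i = Some a.
  rewrite mem_undup mem_pmap => /mapP[i]; rewrite mem_enum inE => hi ->.
  by exists i.
rewrite -[n in _ <= n]card_ord.
apply: (@size_mul_leq_card_disjoint _ _ backers A (n - t)).
- exact: undup_uniq.
- by move=> a b _ _; exact: backers_disjoint.
- by move=> a /decided[i hi dec_i]; exact: backers_large dec_i.
Qed.

End AlgorithmA1.

Theorem theorem2 (V : eqType) (n t : nat) (ht : t < n)
  (v : 'I_n -> V) (F : {set 'I_n}) (hF : #|F| <= t)
  (r1 : 'I_n -> 'I_n -> option V) (r2 : 'I_n -> 'I_n -> 'I_n -> option V)
  (hadv : adversary_ok v F r2) :
  let k := n %/ (n - t) + 1 in
  (* Validity *)
  (forall x : V, (forall i, i \notin F -> v i = x) ->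
     forall i, i \notin F -> decide t v F r1 r2 i = Some x) /\
  (* Agreement *)
  size (undup [seq decide t v F r1 r2 i | i <- enum (~: F)]) <= k.
Proof.
split=> [x|]; [exact: A1_validity | exact: A1_agreement].
Qed.
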